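(* Let $X$ be a real Banach space, $\varepsilon>0$, and $A\subseteq B_X$ nonempty, separable and non-$\varepsilon$-dentable; let $C=\overline{\operatorname{co}}(A)$. Fix $\delta<\varepsilon/2$, let $(B_i)_{i\ge0}$ be a sequence of subsets of $C$, each relatively open in $C$ (norm topology) with $\operatorname{diam}(B_i)<\varepsilon$, such that $C=\bigcup_{i\ge0}B_i$ (such a sequence exists), and let $(\delta_n)_{n\ge0}$ be a sequence in $(0,1)$. Then there exist a finitely branching tree $\mathbb T\subseteq\mathbb N^{<\omega}$ in which every node has at least one child, points $(x_b)_{b\in\mathbb T}\subseteq A$, and slices $(S_b)_{b\in\mathbb T}$ of $C$ (each with a fixed defining pair) such that for every $n\ge0$: (1) for all $b\in\mathbb T_n$, $x_b\in S_b^{\delta_n}\cap A\subseteq S_b$; (2) if $n\ge1$, then for all $b\in\mathbb T_n$, $S_b\cap B_{n-1}=\emptyset$ and $S_b\cap\bigcup_{|p|\le n-1}B_\delta(x_p)=\emptyset$; (3) if $n\ge1$, then for all $b\in\mathbb T_{n-1}$ with children $(b,1),\dots,(b,q)$, we have $S_{(b,i)}\subseteq S_b$ for each $i$ and $x_b\in\operatorname{co}(x_{(b,1)},\dots,x_{(b,q)})+B_{2\delta_{n-1}}(0)$. In particular $(x_b)_{b\in\mathbb T}$ is a $(2\delta_n)_{n\ge0}$-approximate bush.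
   Context: $B_X$ is the closed unit ball of $X$, $B_r(x)$ the open ball of radius $r$ about $x$; $\operatorname{co}$, $\overline{\operatorname{co}}$ denote convex hull and norm-closed convex hull. For bounded nonempty $E\subseteq X$, $f$ in the closed unit ball of $X^*$ and $\delta>0$, the slice $S(f,E,\delta)=\{e\in E: f(e)>\sup f(E)-\delta\}$. A bounded set is non-$\varepsilon$-dentable if every slice has diameter $>\varepsilon$. For $\gamma\in(0,1)$ and a slice $S=S(f,C,\delta)$, its $\gamma$-shallow parallel is $S^\gamma=S(f,C,\gamma\delta/2)$. $\mathbb N^{<\omega}$ is the set of finite sequences of naturals; a tree is a nonempty $\mathbb T\subseteq\mathbb N^{<\omega}$ closed under removing the last entry; $(b,i)$ is a child of $b$; finitely branching means each node has finitely many children, and a node with $k$ children has children $(b,1),\dots,(b,k)$. $|b|$ is the length of $b$, $\mathbb T_n=\{b\in\mathbb T:|b|=n\}$. A family $(x_b)_{b\in\mathbb T}$ is a $(\delta_n)_{n\ge0}$-approximate bush if for each $n$ and $b\in\mathbb T_n$ with children $(b,1),\dots,(b,k)$, $x_b\in\operatorname{co}(x_{(b,1)},\dots,x_{(b,k)})+B_{\delta_n}(0)$. *)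

From Stdlib Require Import Reals Lra List.
Open Scope R_scope.
Import ListNotations.

Record NormedSpace := {
  carrier :> Type;
  vzero : carrier;
  vadd : carrier -> carrier -> carrier;
  vopp : carrier -> carrier;
  vscal : R -> carrier -> carrier;
  vnorm : carrier -> R;
  vadd_assoc : forall x y z, vadd x (vadd y z) = vadd (vadd x y) z;
  vadd_comm : forall x y, vadd x y = vadd y x;
  vadd_zero : forall x, vadd x vzero = x;
  vadd_opp : forall x, vadd x (vopp x) = vzero;
  vscal_one : forall x, vscal 1 x = x;
  vscal_assoc : forall a b x, vscal a (vscal b x) = vscal (a * b) x;
  vscal_distr_v : forall a x y, vscal a (vadd x y) = vadd (vscal a x) (vscal a y);
  vscal_distr_s : forall a b x, vscal (a + b) x = vadd (vscal a x) (vscal b x);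
  vnorm_zero : forall x, vnorm x = 0 -> x = vzero;
  vnorm_scal : forall a x, vnorm (vscal a x) = Rabs a * vnorm x;
  vnorm_triangle : forall x y, vnorm (vadd x y) <= vnorm x + vnorm y
}.

Arguments vzero {_}.
Arguments vadd {_} _ _.
Arguments vopp {_} _.
Arguments vscal {_} _ _.
Arguments vnorm {_} _.

Definition vsub {X : NormedSpace} (x y : X) : X := vadd x (vopp y).
Definition ndist {X : NormedSpace} (x y : X) : R := vnorm (vsub x y).

Definition Banach (X : NormedSpace) : Prop :=
  forall u : nat -> X,
    (forall e, 0 < e -> exists N, forall m n, (N <= m)%nat -> (N <= n)%nat -> ndist (u m) (u n) < e) ->
    exists l : X, forall e, 0 < e -> exists N, forall n, (N <= n)%nat -> ndist (u n) l < e.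

Definition InUnitBall {X : NormedSpace} (x : X) : Prop := vnorm x <= 1.

Definition DualBall {X : NormedSpace} (f : X -> R) : Prop :=
  (forall x y, f (vadd x y) = f x + f y) /\
  (forall a x, f (vscal a x) = a * f x) /\
  (forall x, Rabs (f x) <= vnorm x).

Definition SeparableSet {X : NormedSpace} (A : X -> Prop) : Prop :=
  exists s : nat -> X, (forall n, A (s n)) /\
    forall x, A x -> forall e, 0 < e -> exists n, ndist x (s n) < e.

Fixpoint vsum {X : NormedSpace} (f : nat -> X) (n : nat) : X :=
  match n with O => vzero | S m => vadd (vsum f m) (f m) end.
Fixpoint rsum (f : nat -> R) (n : nat) : R :=
  match n with O => 0 | S m => rsum f m + f m end.

Definition Co {X : NormedSpace} (E : X -> Prop) (x : X) : Prop :=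
  exists (n : nat) (p : nat -> X) (w : nat -> R),
    (forall i, (i < n)%nat -> E (p i) /\ 0 <= w i) /\
    rsum w n = 1 /\
    x = vsum (fun i => vscal (w i) (p i)) n.

Definition ClCo {X : NormedSpace} (E : X -> Prop) (x : X) : Prop :=
  forall e, 0 < e -> exists y, Co E y /\ ndist x y < e.

Definition CoFin {X : NormedSpace} (p : nat -> X) (q : nat) (z : X) : Prop :=
  Co (fun y => exists i, (1 <= i <= q)%nat /\ y = p i) z.

Definition InCoPlusBall {X : NormedSpace} (y : X) (p : nat -> X) (q : nat) (r : R) : Prop :=
  exists z, CoFin p q z /\ vnorm (vsub y z) < r.

Definition Slice {X : NormedSpace} (f : X -> R) (E : X -> Prop) (delta : R) (e : X) : Prop :=
  E e /\ exists s, is_lub (fun r => exists y, E y /\ r = f y) s /\ f e > s - delta.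

Definition NonDentable {X : NormedSpace} (eps : R) (E : X -> Prop) : Prop :=
  forall f delta, DualBall f -> 0 < delta ->
    exists x y, Slice f E delta x /\ Slice f E delta y /\ ndist x y > eps.

Definition DiamLt {X : NormedSpace} (B : X -> Prop) (eps : R) : Prop :=
  exists r, r < eps /\ forall x y, B x -> B y -> ndist x y <= r.

Definition RelOpen {X : NormedSpace} (B C : X -> Prop) : Prop :=
  (forall x, B x -> C x) /\
  forall x, B x -> exists r, 0 < r /\ forall y, C y -> ndist y x < r -> B y.

(** Trees: T ⊆ N^<omega given as a predicate on lists; the children of b
    are b ++ [i]. [k b] is the number of children of b. *)
Definition FinBranchTree (T : list nat -> Prop) (k : list nat -> nat) : Prop :=
  T [] /\
  (forall b i, T (b ++ [i]) -> T b) /\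
  (forall b i, T b -> (T (b ++ [i]) <-> (1 <= i <= k b)%nat)).

Definition ApproxBush {X : NormedSpace} (T : list nat -> Prop) (k : list nat -> nat)
  (x : list nat -> X) (dl : nat -> R) : Prop :=
  forall n b, T b -> length b = n ->
    InCoPlusBall (x b) (fun i => x (b ++ [i])) (k b) (dl n).

(* A node b carries a point x_b of A and a slice
   S_b = S(f_b, C, d_b) whose shallow parallel contains x_b. Its children are the points of A lying
   in the shallow part of good subslices of S_b: subslices avoiding B_n and the delta-balls around
   the finitely many points chosen so far. If x_b were 2 dl_n away from their convex hull, a
   Hahn-Banach functional g separating them, together with a tilt of f_b towards g, would give a
   thin slice of C inside S_b on which g stays above g(x_b) - 2 dl_n. Bourgain's lemma (for a
   non-eps-dentable A, adding a set of diameter < eps to a convex set whose closure misses part of C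
   still misses part of C) produces a good subslice inside that thin slice, and any point of A high
   in it is a child on which g is too large. Since x_b is close to a finite convex combination,
   finitely many children suffice. *)

From Stdlib Require Import Reals Lra Lia List Classical ClassicalEpsilon FunctionalExtensionality.
From mathcomp Require classical_sets.
Open Scope R_scope.
Import ListNotations.

Arguments vadd_assoc {_} _ _ _.
Arguments vadd_comm {_} _ _.
Arguments vadd_zero {_} _.
Arguments vadd_opp {_} _.
Arguments vscal_one {_} _.
Arguments vscal_assoc {_} _ _ _.
Arguments vscal_distr_v {_} _ _ _.
Arguments vscal_distr_s {_} _ _ _.
Arguments vnorm_scal {_} _ _.
Arguments vnorm_triangle {_} _ _.

Section VectorAlgebra.
Context {X : NormedSpace}.
Implicit Types (x y z u v : X) (a t : R).

Lemma vadd_0l x : vadd vzero x = x.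
Proof. rewrite vadd_comm; apply vadd_zero. Qed.

Lemma vadd_cancel_l x y z : vadd x y = vadd x z -> y = z.
Proof.
  intro H. assert (H2 : vadd (vopp x) (vadd x y) = vadd (vopp x) (vadd x z)) by now rewrite H.
  rewrite !vadd_assoc, (vadd_comm (vopp x) x), vadd_opp, !vadd_0l in H2. exact H2.
Qed.

Lemma vscal_0l x : vscal 0 x = vzero.
Proof.
  apply (vadd_cancel_l (vscal 0 x)). rewrite vadd_zero, <- vscal_distr_s. f_equal; ring.
Qed.

Lemma vscal_0r a : vscal a (@vzero X) = vzero.
Proof. now rewrite <- (vscal_0l vzero), vscal_assoc, Rmult_0_r. Qed.

Lemma vopp_scal x : vopp x = vscal (-1) x.
Proof.
  apply (vadd_cancel_l x). rewrite vadd_opp.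
  rewrite <- (vscal_one x) at 1. rewrite <- vscal_distr_s.
  replace (1 + -1) with 0 by ring. now rewrite vscal_0l.
Qed.

Lemma vopp_unique u v : vadd u v = vzero -> u = vopp v.
Proof. intros H. apply (vadd_cancel_l v). now rewrite vadd_opp, vadd_comm. Qed.

Lemma vopp_vadd x y : vopp (vadd x y) = vadd (vopp x) (vopp y).
Proof. rewrite !vopp_scal; apply vscal_distr_v. Qed.

Lemma vopp_vopp x : vopp (vopp x) = x.
Proof. rewrite !vopp_scal, vscal_assoc. replace (-1 * -1) with 1 by ring. apply vscal_one. Qed.

Lemma vadd_ACA x y u v : vadd (vadd x y) (vadd u v) = vadd (vadd x u) (vadd y v).
Proof. rewrite <- !vadd_assoc. f_equal. rewrite !vadd_assoc. f_equal. apply vadd_comm. Qed.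

Lemma vsub_diag x : vsub x x = vzero.
Proof. apply vadd_opp. Qed.

Lemma vsub_0r x : vsub x vzero = x.
Proof. unfold vsub. now rewrite vopp_scal, vscal_0r, vadd_zero. Qed.

Lemma vsub_add x y : vadd (vsub x y) y = x.
Proof. unfold vsub. now rewrite <- vadd_assoc, (vadd_comm (vopp y) y), vadd_opp, vadd_zero. Qed.

Lemma vsub_add_sub x y z : vadd (vsub x y) (vsub y z) = vsub x z.
Proof.
  unfold vsub. rewrite <- vadd_assoc. f_equal.
  now rewrite vadd_assoc, (vadd_comm (vopp y) y), vadd_opp, vadd_0l.
Qed.

Lemma vopp_vsub x y : vopp (vsub x y) = vsub y x.
Proof. unfold vsub. now rewrite vopp_vadd, vopp_vopp, vadd_comm. Qed.

Lemma vsub_vadd x y u v : vsub (vadd x y) (vadd u v) = vadd (vsub x u) (vsub y v).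
Proof. unfold vsub. rewrite vopp_vadd. apply vadd_ACA. Qed.

Lemma vscal_sub a x y : vscal a (vsub x y) = vsub (vscal a x) (vscal a y).
Proof. unfold vsub. rewrite vscal_distr_v, !vopp_scal, !vscal_assoc. do 2 f_equal. ring. Qed.

Lemma vscal_distr_sub a t x : vscal (a - t) x = vsub (vscal a x) (vscal t x).
Proof. unfold vsub, Rminus. rewrite vscal_distr_s, vopp_scal, vscal_assoc. do 2 f_equal. ring. Qed.

Lemma vnorm_0 : vnorm (@vzero X) = 0.
Proof. rewrite <- (vscal_0l vzero), vnorm_scal, Rabs_R0; ring. Qed.

Lemma vnorm_opp x : vnorm (vopp x) = vnorm x.
Proof. rewrite vopp_scal, vnorm_scal. replace (Rabs (-1)) with 1 by (rewrite Rabs_left; lra). ring. Qed.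

Lemma vnorm_ge0 x : 0 <= vnorm x.
Proof. pose proof (vnorm_triangle x (vopp x)). rewrite vadd_opp, vnorm_0, vnorm_opp in H. lra. Qed.

Lemma ndist_sym x y : ndist x y = ndist y x.
Proof. unfold ndist. now rewrite <- vnorm_opp, vopp_vsub. Qed.

Lemma ndist_triangle x y z : ndist x z <= ndist x y + ndist y z.
Proof. unfold ndist. rewrite <- (vsub_add_sub x y z). apply vnorm_triangle. Qed.

Lemma ndist_diag x : ndist x x = 0.
Proof. unfold ndist; rewrite vsub_diag; apply vnorm_0. Qed.

Lemma ndist_le_norms x y : ndist x y <= vnorm x + vnorm y.
Proof. unfold ndist, vsub. rewrite <- (vnorm_opp y). apply vnorm_triangle. Qed.

End VectorAlgebra.

Section Functionals.
Context {X : NormedSpace} (f : X -> R) (Hf : DualBall f).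

Lemma dual_add x y : f (vadd x y) = f x + f y.
Proof. apply (proj1 Hf). Qed.

Lemma dual_scal a x : f (vscal a x) = a * f x.
Proof. apply (proj1 (proj2 Hf)). Qed.

Lemma dual_bound x : Rabs (f x) <= vnorm x.
Proof. apply (proj2 (proj2 Hf)). Qed.

Lemma dual_0 : f vzero = 0.
Proof. rewrite <- (vscal_0l (@vzero X)), dual_scal. ring. Qed.

Lemma dual_sub x y : f (vsub x y) = f x - f y.
Proof. unfold vsub. rewrite dual_add, vopp_scal, dual_scal. ring. Qed.

Lemma dual_lipschitz x y : f x <= f y + ndist x y.
Proof.
  pose proof (dual_bound (vsub x y)) as H. rewrite dual_sub in H.
  pose proof (Rle_abs (f x - f y)). unfold ndist. lra.
Qed.

End Functionals.

Definition tilt {X : NormedSpace} (f g : X -> R) t : X -> R := fun x => (f x + t * g x) / (1 + t).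

Lemma tilt_dual {X : NormedSpace} (f g : X -> R) t : DualBall f -> DualBall g -> 0 < t ->
  DualBall (tilt f g t).
Proof.
  intros Hf Hg Ht. unfold tilt. split; [|split].
  - intros x y. rewrite !(dual_add _ Hf), !(dual_add _ Hg). field. lra.
  - intros a x. rewrite !(dual_scal _ Hf), !(dual_scal _ Hg). field. lra.
  - intros x. pose proof (dual_bound f Hf x). pose proof (dual_bound g Hg x).
    pose proof (Rle_abs (f x)). pose proof (Rle_abs (- f x)). rewrite Rabs_Ropp in H2.
    pose proof (Rle_abs (g x)). pose proof (Rle_abs (- g x)). rewrite Rabs_Ropp in H4.
    apply Rabs_le. split; [apply Rmult_le_reg_r with (1 + t) | apply Rmult_le_reg_r with (1 + t)];
      try lra; unfold Rdiv; rewrite Rmult_assoc, Rinv_l; nra.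
Qed.

Section Sums.

Lemma rsum_ext (F G : nat -> R) n : (forall i, (i < n)%nat -> F i = G i) -> rsum F n = rsum G n.
Proof. induction n; simpl; intros H; auto. rewrite IHn by (intros; apply H; lia). now rewrite H by lia. Qed.

Lemma rsum_le (F G : nat -> R) n : (forall i, (i < n)%nat -> F i <= G i) -> rsum F n <= rsum G n.
Proof.
  induction n; simpl; intros H; [lra|].
  pose proof (H n ltac:(lia)). pose proof (IHn ltac:(intros; apply H; lia)). lra.
Qed.

Lemma rsum_scal (F : nat -> R) c n : rsum (fun i => c * F i) n = c * rsum F n.
Proof. induction n; simpl; [ring|]. rewrite IHn. ring. Qed.

Lemma rsum_affine (w F : nat -> R) a b n :
  rsum (fun j => w j * (a + b * F j)) n = a * rsum w n + b * rsum (fun j => w j * F j) n.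
Proof. induction n; simpl; [ring|]. rewrite IHn. ring. Qed.

Lemma rsum_app (F : nat -> R) n m : rsum F (n + m) = rsum F n + rsum (fun i => F (n + i)%nat) m.
Proof. induction m; simpl; [rewrite Nat.add_0_r; ring|]. rewrite Nat.add_succ_r. simpl. rewrite IHm. ring. Qed.

Context {X : NormedSpace}.

Lemma vsum_ext (F G : nat -> X) n : (forall i, (i < n)%nat -> F i = G i) -> vsum F n = vsum G n.
Proof. induction n; simpl; intros H; auto. rewrite IHn by (intros; apply H; lia). now rewrite H by lia. Qed.

Lemma vsum_app (F : nat -> X) n m :
  vsum F (n + m) = vadd (vsum F n) (vsum (fun i => F (n + i)%nat) m).
Proof.
  induction m; simpl; [now rewrite Nat.add_0_r, vadd_zero|].
  rewrite Nat.add_succ_r. simpl. now rewrite IHm, vadd_assoc.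
Qed.

Lemma vscal_vsum a (F : nat -> X) n : vscal a (vsum F n) = vsum (fun i => vscal a (F i)) n.
Proof. induction n; simpl; [apply vscal_0r|]. now rewrite vscal_distr_v, IHn. Qed.

Lemma dual_vsum (f : X -> R) (w : nat -> R) (p : nat -> X) n : DualBall f ->
  f (vsum (fun i => vscal (w i) (p i)) n) = rsum (fun i => w i * f (p i)) n.
Proof.
  intros Hf. induction n; simpl; [now apply dual_0|].
  now rewrite (dual_add _ Hf), (dual_scal _ Hf), IHn.
Qed.

Lemma vnorm_comb (w : nat -> R) (p : nat -> X) n : (forall i, (i < n)%nat -> 0 <= w i) ->
  vnorm (vsum (fun i => vscal (w i) (p i)) n) <= rsum (fun i => w i * vnorm (p i)) n.
Proof.
  induction n; simpl; intros Hw; [rewrite vnorm_0; lra|].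
  pose proof (vnorm_triangle (vsum (fun i => vscal (w i) (p i)) n) (vscal (w n) (p n))).
  rewrite vnorm_scal, Rabs_right in H by (apply Rle_ge, Hw; lia).
  pose proof (IHn ltac:(intros; apply Hw; lia)). lra.
Qed.

Lemma vsum_sub (w : nat -> R) (p : nat -> X) y n :
  vsum (fun i => vscal (w i) (vsub (p i) y)) n =
  vsub (vsum (fun i => vscal (w i) (p i)) n) (vscal (rsum w n) y).
Proof.
  induction n; simpl; [now rewrite vscal_0l, vsub_0r|].
  now rewrite IHn, vscal_distr_s, vsub_vadd, vscal_sub.
Qed.

Lemma ndist_comb (w : nat -> R) (p : nat -> X) y n :
  (forall i, (i < n)%nat -> 0 <= w i) -> rsum w n = 1 ->
  ndist (vsum (fun i => vscal (w i) (p i)) n) y <= rsum (fun i => w i * ndist (p i) y) n.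
Proof.
  intros Hw Hs. unfold ndist. rewrite <- (vscal_one y) at 1. rewrite <- Hs, <- vsum_sub.
  now apply vnorm_comb.
Qed.

End Sums.

Section ConvexHull.
Context {X : NormedSpace}.
Implicit Types (E F : X -> Prop).

Lemma Co_single E x : E x -> Co E x.
Proof.
  intros H. exists 1%nat, (fun _ => x), (fun _ => 1). split; [|split].
  - intros i Hi; split; auto; lra.
  - simpl; ring.
  - simpl. now rewrite vadd_0l, vscal_one.
Qed.

Lemma Co_mono E F z : (forall x, E x -> F x) -> Co E z -> Co F z.
Proof.
  intros H [n [p [w [H1 H2]]]]. exists n, p, w. split; auto.
  intros i Hi; destruct (H1 i Hi); auto.
Qed.

Lemma Co_convex E x y t : Co E x -> Co E y -> 0 <= t <= 1 ->
  Co E (vadd (vscal t x) (vscal (1 - t) y)).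
Proof.
  intros [n [p [w [H1 [H2 H3]]]]] [m [q [v [K1 [K2 K3]]]]] Ht.
  exists (n + m)%nat, (fun i => if Nat.ltb i n then p i else q (i - n)%nat),
    (fun i => if Nat.ltb i n then t * w i else (1 - t) * v (i - n)%nat).
  assert (Lo : forall i, (i < n)%nat -> Nat.ltb i n = true) by (intros; now apply Nat.ltb_lt).
  assert (Hi : forall i, Nat.ltb (n + i) n = false) by (intros; apply Nat.ltb_ge; lia).
  split; [|split].
  - intros i Hin. destruct (Nat.ltb i n) eqn:E1.
    + apply Nat.ltb_lt in E1. destruct (H1 i E1). split; auto. apply Rmult_le_pos; lra.
    + apply Nat.ltb_ge in E1. destruct (K1 (i - n)%nat ltac:(lia)). split; auto.
      apply Rmult_le_pos; lra.
  - rewrite rsum_app, (rsum_ext _ (fun i => t * w i) n), (rsum_ext _ (fun i => (1 - t) * v i) m).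
    + rewrite !rsum_scal, H2, K2. ring.
    + intros i _. rewrite Hi. do 3 f_equal. lia.
    + intros i Hin. now rewrite Lo.
  - rewrite vsum_app, H3, K3, !vscal_vsum. f_equal; apply vsum_ext; intros i Hin.
    + now rewrite Lo, vscal_assoc.
    + rewrite Hi, vscal_assoc. do 3 f_equal; lia.
Qed.

Lemma ClCo_incl E x : E x -> ClCo E x.
Proof. intros H e He. exists x. split; [now apply Co_single|]. now rewrite ndist_diag. Qed.

Lemma ClCo_mono E F z : (forall x, E x -> F x) -> ClCo E z -> ClCo F z.
Proof.
  intros H Hz e He. destruct (Hz e He) as [y [Hy Hd]].
  exists y; split; auto. eapply Co_mono; eauto.
Qed.

Lemma Co_halfspace E (k : X -> R) a z : DualBall k ->
  (forall x, E x -> k x <= a) -> Co E z -> k z <= a.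
Proof.
  intros Hk H [n [p [w [H1 [H2 H3]]]]]. subst z. rewrite dual_vsum by auto.
  replace a with (rsum (fun i => w i * (a + 0 * 0)) n) by (rewrite rsum_affine, H2; ring).
  apply rsum_le. intros i Hi. destruct (H1 i Hi). rewrite Rmult_0_l, Rplus_0_r.
  apply Rmult_le_compat_l; auto.
Qed.

Lemma ClCo_halfspace E (k : X -> R) a z : DualBall k ->
  (forall x, E x -> k x <= a) -> ClCo E z -> k z <= a.
Proof.
  intros Hk H Hz. apply Rnot_lt_le. intro Hlt.
  destruct (Hz (k z - a) ltac:(lra)) as [y [Hy Hd]].
  pose proof (Co_halfspace E k a y Hk H Hy). pose proof (dual_lipschitz k Hk z y). lra.
Qed.

Lemma Co_unit_ball E z : (forall x, E x -> vnorm x <= 1) -> Co E z -> vnorm z <= 1.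
Proof.
  intros H [n [p [w [H1 [H2 H3]]]]]. subst z. eapply Rle_trans; [apply vnorm_comb; apply H1|].
  rewrite <- H2. apply rsum_le. intros i Hi. destruct (H1 i Hi) as [Hp Hw].
  pose proof (H _ Hp). rewrite <- (Rmult_1_r (w i)) at 2. now apply Rmult_le_compat_l.
Qed.

Lemma ClCo_unit_ball E z : (forall x, E x -> vnorm x <= 1) -> ClCo E z -> vnorm z <= 1.
Proof.
  intros H Hz. apply Rnot_lt_le. intro Hlt.
  destruct (Hz (vnorm z - 1) ltac:(lra)) as [y [Hy Hd]].
  pose proof (Co_unit_ball E y H Hy). unfold ndist in Hd.
  pose proof (vnorm_triangle (vsub z y) y). rewrite vsub_add in H1. lra.
Qed.

Lemma not_ClCo_dist E c : ~ ClCo E c -> exists r, 0 < r /\ forall y, Co E y -> r <= ndist c y.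
Proof.
  intros H. apply NNPP. intro H2. apply H. intros e He. apply NNPP. intro H3.
  apply H2. exists e. split; auto. intros y Hy. apply Rnot_lt_le. intro H4. apply H3. exists y; auto.
Qed.

End ConvexHull.

Section HahnBanach.
Context {X : NormedSpace} (Dom : X -> R -> Prop).

(* [Dom x q] reads "q dominates the sublinear functional at x"; a relation rather than a
   function is used because the sublinear functional needed below is an infimum. *)
Hypothesis Dom_scal : forall x q s, Dom x q -> 0 < s -> Dom (vscal s x) (s * q).
Hypothesis Dom_add : forall x y q1 q2, Dom x q1 -> Dom y q2 -> Dom (vadd x y) (q1 + q2).
Hypothesis Dom_norm : forall x, Dom x (vnorm x).

Definition DominatedGraph (G : X * R -> Prop) : Prop :=
  (forall x a b, G (x, a) -> G (x, b) -> a = b) /\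
  (forall x y a b, G (x, a) -> G (y, b) -> G (vadd x y, a + b)) /\
  (forall s x a, G (x, a) -> G (vscal s x, s * a)) /\
  (forall x a q, G (x, a) -> Dom x q -> a <= q).

Lemma dominated_extension_value G z : DominatedGraph G -> G (vzero, 0) ->
  exists c, (forall m a q, G (m, a) -> Dom (vsub m z) q -> a - q <= c) /\
            (forall m a q, G (m, a) -> Dom (vadd m z) q -> c <= q - a).
Proof.
  intros [_ [Gadd [_ Gdom]]] G0.
  assert (Key : forall m a q m' a' q', G (m, a) -> Dom (vsub m z) q ->
                  G (m', a') -> Dom (vadd m' z) q' -> a - q <= q' - a').
  { intros m a q m' a' q' H1 H2 H3 H4. pose proof (Dom_add _ _ _ _ H2 H4) as H5.
    unfold vsub in H5.
    rewrite vadd_ACA, (vadd_comm (vopp z) z), vadd_opp, vadd_zero in H5.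
    pose proof (Gdom _ _ _ (Gadd _ _ _ _ H1 H3) H5). lra. }
  set (L := fun r => exists m a q, G (m, a) /\ Dom (vsub m z) q /\ r = a - q).
  destruct (completeness L) as [c [Hc1 Hc2]].
  - exists (vnorm z - 0). intros r [m [a [q [H1 [H2 ->]]]]].
    apply (Key m a q vzero 0 (vnorm z)); auto. rewrite vadd_0l. apply Dom_norm.
  - exists (0 - vnorm (vsub vzero z)), vzero, 0, (vnorm (vsub vzero z)). auto.
  - exists c. split.
    + intros m a q H1 H2. apply Hc1. exists m, a, q; auto.
    + intros m a q H1 H2. apply Hc2. intros r [m0 [a0 [q0 [K1 [K2 ->]]]]]. eapply Key; eauto.
Qed.

Definition graph_extension (G : X * R -> Prop) z c : X * R -> Prop :=
  fun p => exists m a t, G (m, a) /\ p = (vadd m (vscal t z), a + t * c).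

Lemma graph_extension_functional G z c : DominatedGraph G -> (forall a, ~ G (z, a)) ->
  forall x a b, graph_extension G z c (x, a) -> graph_extension G z c (x, b) -> a = b.
Proof.
  intros [Gfun [Gadd [Gscal _]]] Hz x a b [m [a1 [t [K1 K2]]]] [m' [a1' [t' [K1' K2']]]].
  injection K2 as Kx ->. injection K2' as Kx' ->. rewrite Kx in Kx'.
  destruct (Req_dec t t') as [<-|Ht].
  - rewrite (vadd_comm m), (vadd_comm m') in Kx'. apply vadd_cancel_l in Kx'. subst m'.
    now rewrite (Gfun _ _ _ K1 K1').
  - exfalso. apply (Hz (/ (t' - t) * (a1 + -1 * a1'))).
    assert (Hm : vsub m m' = vscal (t' - t) z).
    { assert (H2 : vsub (vadd m (vscal t z)) (vadd m' (vscal t' z)) = vzero)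
        by (rewrite Kx'; apply vsub_diag).
      rewrite vsub_vadd in H2. apply vopp_unique in H2.
      now rewrite H2, vopp_vsub, vscal_distr_sub. }
    replace z with (vscal (/ (t' - t)) (vadd m (vscal (-1) m'))).
    { apply Gscal, Gadd, Gscal; auto. }
    rewrite <- vopp_scal. fold (vsub m m'). rewrite Hm, vscal_assoc.
    replace (/ (t' - t) * (t' - t)) with 1 by (field; lra). apply vscal_one.
Qed.

Lemma graph_extension_dominated G z c : DominatedGraph G ->
  (forall m a q, G (m, a) -> Dom (vsub m z) q -> a - q <= c) ->
  (forall m a q, G (m, a) -> Dom (vadd m z) q -> c <= q - a) ->
  forall x a q, graph_extension G z c (x, a) -> Dom x q -> a <= q.
Proof.
  intros [_ [_ [Gscal Gdom]]] Lo Up x a q [m [a1 [t [K1 K2]]]] HD. injection K2 as -> ->.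
  destruct (Rtotal_order t 0) as [Ht|[->|Ht]].
  - pose proof (Dom_scal _ _ (- / t) HD ltac:(apply Ropp_0_gt_lt_contravar, Rinv_lt_0_compat; auto)).
    rewrite vscal_distr_v, vscal_assoc in H. replace (- / t * t) with (-1) in H by (field; lra).
    rewrite <- vopp_scal in H. fold (vsub (vscal (- / t) m) z) in H.
    pose proof (Lo _ _ _ (Gscal (- / t) _ _ K1) H).
    assert (HT : t * ((a1 - q) * (- / t)) >= t * c) by (apply Rle_ge, Rmult_le_compat_neg_l; lra).
    replace (t * ((a1 - q) * - / t)) with (q - a1) in HT by (field; lra). lra.
  - rewrite vscal_0l, vadd_zero in HD. pose proof (Gdom _ _ _ K1 HD). lra.
  - pose proof (Dom_scal _ _ (/ t) HD ltac:(apply Rinv_0_lt_compat; auto)).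
    rewrite vscal_distr_v, vscal_assoc in H. replace (/ t * t) with 1 in H by (field; lra).
    rewrite vscal_one in H. pose proof (Up _ _ _ (Gscal (/ t) _ _ K1) H).
    assert (HT : t * c <= t * (/ t * q - / t * a1)) by (apply Rmult_le_compat_l; lra).
    replace (t * (/ t * q - / t * a1)) with (q - a1) in HT by (field; lra). lra.
Qed.

Lemma dominated_graph_extend G z : DominatedGraph G -> G (vzero, 0) -> (forall a, ~ G (z, a)) ->
  exists G', DominatedGraph G' /\ (forall p, G p -> G' p) /\ ~ (forall p, G' p -> G p).
Proof.
  intros HG G0 Hz. destruct (dominated_extension_value G z HG G0) as [c [Lo Up]].
  exists (graph_extension G z c). split; [|split].
  - pose proof HG as [_ [Gadd [Gscal _]]]. split; [|split; [|split]].
    + now apply graph_extension_functional.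
    + intros x y a b [m [a1 [t [K1 K2]]]] [m' [a1' [t' [K1' K2']]]].
      injection K2 as -> ->. injection K2' as -> ->.
      exists (vadd m m'), (a1 + a1'), (t + t'). split; [now apply Gadd|].
      f_equal; [now rewrite vadd_ACA, vscal_distr_s | ring].
    + intros s x a [m [a1 [t [K1 K2]]]]. injection K2 as -> ->.
      exists (vscal s m), (s * a1), (s * t). split; [now apply Gscal|].
      f_equal; [now rewrite vscal_distr_v, vscal_assoc | ring].
    + now apply graph_extension_dominated.
  - intros [m a] H. exists m, a, 0. split; auto. rewrite vscal_0l, vadd_zero. f_equal. ring.
  - intros H. apply (Hz c), H. exists vzero, 0, 1. split; auto.
    rewrite vadd_0l, vscal_one. f_equal. ring.
Qed.

Lemma DominatedGraph_chain_union (F : (X * R -> Prop) -> Prop) :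
  (forall G, F G -> DominatedGraph G) ->
  (forall G1 G2, F G1 -> F G2 -> (forall p, G1 p -> G2 p) \/ (forall p, G2 p -> G1 p)) ->
  DominatedGraph (fun p => exists2 G, F G & G p).
Proof.
  intros HF Htot.
  assert (Join : forall G1 G2, F G1 -> F G2 -> exists G3, F G3 /\ (forall p, G1 p -> G3 p) /\
                   (forall p, G2 p -> G3 p)).
  { intros G1 G2 F1 F2. destruct (Htot G1 G2 F1 F2) as [S|S]; [exists G2 | exists G1]; auto. }
  split; [|split; [|split]].
  - intros x a b [G1 F1 Ha] [G2 F2 Hb]. destruct (Join G1 G2 F1 F2) as [G3 [F3 [S1 S2]]].
    destruct (HF G3 F3) as [Hf _]. eapply Hf; eauto.
  - intros x y a b [G1 F1 Ha] [G2 F2 Hb]. destruct (Join G1 G2 F1 F2) as [G3 [F3 [S1 S2]]].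
    exists G3; auto. destruct (HF G3 F3) as [_ [Hf _]]. eapply Hf; eauto.
  - intros s x a [G1 F1 Ha]. exists G1; auto. destruct (HF G1 F1) as [_ [_ [Hf _]]]. eapply Hf; eauto.
  - intros x a q [G1 F1 Ha]. destruct (HF G1 F1) as [_ [_ [_ Hf]]]. eapply Hf; eauto.
Qed.

Hypothesis Dom_0 : forall q, Dom vzero q -> 0 <= q.

Lemma DominatedGraph_add_origin G : DominatedGraph G ->
  DominatedGraph (fun p => G p \/ p = (vzero, 0)).
Proof.
  intros [Gfun [Gadd [Gscal Gdom]]].
  assert (Z : forall a, G (vzero, a) -> a = 0).
  { intros a Ha. apply (Gfun vzero); auto. replace (vzero, 0) with (vscal 0 (@vzero X), 0 * a).
    { now apply Gscal. } f_equal; [apply vscal_0l | ring]. }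
  split; [|split; [|split]].
  - intros x a b [H1|H1] [H2|H2].
    + eauto.
    + injection H2 as -> ->. auto.
    + injection H1 as -> ->. symmetry; auto.
    + injection H1 as -> ->. now injection H2 as ->.
  - intros x y a b [H1|H1] [H2|H2]; try injection H1 as -> ->; try injection H2 as -> ->.
    + left. now apply Gadd.
    + left. now rewrite vadd_zero, Rplus_0_r.
    + left. now rewrite vadd_0l, Rplus_0_l.
    + right. now rewrite vadd_zero, Rplus_0_r.
  - intros s x a [H1|H1]; [left; now apply Gscal|]. injection H1 as -> ->.
    right. rewrite vscal_0r. f_equal. ring.
  - intros x a q [H1|H1] HD; [eapply Gdom; eauto|]. injection H1 as -> ->. now apply Dom_0.
Qed.

Lemma hahn_banach : exists g : X -> R,
  (forall x y, g (vadd x y) = g x + g y) /\ (forall a x, g (vscal a x) = a * g x) /\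
  (forall x q, Dom x q -> g x <= q).
Proof.
  destruct (@classical_sets.Zorn_bigcup (X * R)%type DominatedGraph) as [G [HG Hmax]].
  { intros F HF Htot. now apply DominatedGraph_chain_union. }
  assert (G0 : G (vzero, 0)).
  { apply NNPP. intro Hn. apply (Hmax (fun p => G p \/ p = (vzero, 0))).
    - split; [intros p Hp; now left|]. intro S. apply Hn, S. now right.
    - now apply DominatedGraph_add_origin. }
  assert (Htot : forall z, exists a, G (z, a)).
  { intros z. apply NNPP. intro Hn.
    destruct (dominated_graph_extend G z HG G0) as [G' [HG' [Hsub Hnsub]]].
    { intros a Ha. apply Hn. now exists a. }
    apply (Hmax G'); auto. split; auto. }
  destruct HG as [Gfun [Gadd [Gscal Gdom]]].
  destruct (choice _ Htot) as [g Hg].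
  exists g. split; [|split].
  - intros x y. eapply Gfun; [apply Hg | apply Gadd; apply Hg].
  - intros a x. eapply Gfun; [apply Hg | apply Gscal; apply Hg].
  - intros x q HD. eapply Gdom; eauto.
Qed.

End HahnBanach.

Lemma vsub_convex {X : NormedSpace} (x y1 y2 : X) t :
  vsub x (vadd (vscal t y1) (vscal (1 - t) y2)) =
  vadd (vscal t (vsub x y1)) (vscal (1 - t) (vsub x y2)).
Proof.
  rewrite !vscal_sub, <- vsub_vadd, <- vscal_distr_s. replace (t + (1 - t)) with 1 by ring.
  now rewrite vscal_one.
Qed.

Section Separation.
Context {X : NormedSpace} (D : X -> Prop) (x0 : X) (r : R).
Hypothesis D_convex : forall y1 y2 t, D y1 -> D y2 -> 0 <= t <= 1 ->
  D (vadd (vscal t y1) (vscal (1 - t) y2)).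
Hypothesis D_far : forall y, D y -> r <= ndist x0 y.

(* The sublinear functional p(x) = min (|x|, inf_{l > 0, y in D} |x + l (x0 - y)| - l r), encoded
   as a domination relation; a linear functional below p separates x0 from D by r. *)
Definition sep_gauge (x : X) (q : R) : Prop :=
  vnorm x <= q \/ exists l y, 0 < l /\ D y /\ vnorm (vadd x (vscal l (vsub x0 y))) - l * r <= q.

Lemma sep_gauge_scal x q s : sep_gauge x q -> 0 < s -> sep_gauge (vscal s x) (s * q).
Proof.
  intros [H|[l [y [Hl [Hy H]]]]] Hs.
  - left. rewrite vnorm_scal, Rabs_right by lra. apply Rmult_le_compat_l; lra.
  - right. exists (s * l), y. split; [now apply Rmult_lt_0_compat|]. split; auto.
    rewrite <- vscal_assoc, <- vscal_distr_v, vnorm_scal, Rabs_right by lra.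
    replace (s * l * r) with (s * (l * r)) by ring. rewrite <- Rmult_minus_distr_l.
    apply Rmult_le_compat_l; lra.
Qed.

Lemma sep_gauge_add x y q1 q2 : sep_gauge x q1 -> sep_gauge y q2 -> sep_gauge (vadd x y) (q1 + q2).
Proof.
  intros [H1|[l1 [y1 [Hl1 [Hy1 H1]]]]] [H2|[l2 [y2 [Hl2 [Hy2 H2]]]]].
  - left. pose proof (vnorm_triangle x y). lra.
  - right. exists l2, y2. do 2 (split; auto). rewrite <- vadd_assoc.
    pose proof (vnorm_triangle x (vadd y (vscal l2 (vsub x0 y2)))). lra.
  - right. exists l1, y1. do 2 (split; auto).
    rewrite (vadd_comm x y), <- vadd_assoc, (vadd_comm y).
    pose proof (vnorm_triangle (vadd x (vscal l1 (vsub x0 y1))) y). lra.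
  - right. set (t := l1 / (l1 + l2)).
    assert (Ht : 0 <= t <= 1).
    { unfold t. split; [apply Rmult_le_pos; [lra | left; apply Rinv_0_lt_compat; lra]|].
      apply Rmult_le_reg_r with (l1 + l2); [lra|]. unfold Rdiv.
      rewrite Rmult_assoc, Rinv_l by lra. lra. }
    exists (l1 + l2), (vadd (vscal t y1) (vscal (1 - t) y2)).
    split; [lra|]. split; [now apply D_convex|].
    rewrite vsub_convex, vscal_distr_v, !vscal_assoc.
    replace ((l1 + l2) * t) with l1 by (unfold t; field; lra).
    replace ((l1 + l2) * (1 - t)) with l2 by (unfold t; field; lra).
    rewrite vadd_ACA.
    pose proof (vnorm_triangle (vadd x (vscal l1 (vsub x0 y1))) (vadd y (vscal l2 (vsub x0 y2)))).
    lra.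
Qed.

Lemma sep_gauge_0 q : sep_gauge vzero q -> 0 <= q.
Proof.
  intros [H|[l [y [Hl [Hy H]]]]].
  - now rewrite vnorm_0 in H.
  - rewrite vadd_0l, vnorm_scal, Rabs_right in H by lra. pose proof (D_far y Hy). unfold ndist in H0.
    assert (l * r <= l * vnorm (vsub x0 y)) by (apply Rmult_le_compat_l; lra). lra.
Qed.

Lemma convex_separation : exists g, DualBall g /\ forall y, D y -> g y <= g x0 - r.
Proof.
  destruct (hahn_banach sep_gauge sep_gauge_scal sep_gauge_add (fun x => or_introl (Rle_refl _))
              sep_gauge_0) as [g [Hg1 [Hg2 Hg3]]].
  assert (Hgd : DualBall g).
  { split; auto. split; auto. intros x. apply Rabs_le. split.
    - assert (g (vscal (-1) x) <= vnorm (vscal (-1) x)) by (apply Hg3; left; lra).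
      rewrite Hg2, vnorm_scal in H. replace (Rabs (-1)) with 1 in H by (rewrite Rabs_left; lra). lra.
    - apply Hg3. left; lra. }
  exists g. split; auto. intros y Hy.
  assert (g (vsub y x0) <= - r).
  { apply Hg3. right. exists 1, y. do 2 (split; [lra || auto|]).
    rewrite vscal_one, vsub_add_sub, vsub_diag, vnorm_0. lra. }
  rewrite (dual_sub g Hgd) in H. lra.
Qed.

End Separation.

Lemma ClCo_separation {X : NormedSpace} (E : X -> Prop) c : ~ ClCo E c ->
  exists g r, DualBall g /\ 0 < r /\ forall y, ClCo E y -> g y <= g c - r.
Proof.
  intros H. destruct (not_ClCo_dist E c H) as [r [Hr Hd]].
  destruct (convex_separation (Co E) c r) as [g [Hg Hg2]]; auto.
  intros; now apply Co_convex.
  exists g, r. do 2 (split; auto). intros y Hy. apply (ClCo_halfspace E g (g c - r) y Hg); auto.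
  intros x Hx. apply Hg2. now apply Co_single.
Qed.

Lemma lub_approx (E : R -> Prop) s e : is_lub E s -> 0 < e -> exists r, E r /\ r > s - e.
Proof.
  intros [H1 H2] He. apply NNPP. intro H. assert (is_upper_bound E (s - e)).
  { intros r Hr. apply Rnot_lt_le. intro H3. apply H. exists r. split; auto. }
  apply H2 in H0. lra.
Qed.

Definition Img {X : NormedSpace} (E : X -> Prop) (k : X -> R) : R -> Prop :=
  fun r => exists y, E y /\ r = k y.

Lemma Img_le_lub {X : NormedSpace} (E : X -> Prop) k s y : is_lub (Img E k) s -> E y -> k y <= s.
Proof. intros [H1 _] Hy. apply H1. now exists y. Qed.

Lemma Slice_lub {X : NormedSpace} (E : X -> Prop) k s e y : is_lub (Img E k) s ->
  Slice k E e y <-> E y /\ k y > s - e.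
Proof.
  intros Hs. split.
  - intros [Hy [s' [Hs' H]]]. split; auto. now rewrite (is_lub_u _ _ _ Hs Hs').
  - intros [Hy H]. split; auto. now exists s.
Qed.

Lemma Slice_widen {X : NormedSpace} (f : X -> R) E e1 e2 y : e1 <= e2 -> Slice f E e1 y -> Slice f E e2 y.
Proof. intros He [H1 [s [H2 H3]]]. split; auto. exists s. split; auto. lra. Qed.

Definition ind {X : NormedSpace} (E : X -> Prop) (x : X) : R :=
  if excluded_middle_informative (E x) then 1 else 0.

Lemma ind_1 {X : NormedSpace} (E : X -> Prop) x : E x -> ind E x = 1.
Proof. intros H. unfold ind. destruct (excluded_middle_informative (E x)); tauto. Qed.

Lemma ind_0 {X : NormedSpace} (E : X -> Prop) x : ~ E x -> ind E x = 0.
Proof. intros H. unfold ind. destruct (excluded_middle_informative (E x)); tauto. Qed.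

Lemma ind_bounds {X : NormedSpace} (E : X -> Prop) x : 0 <= ind E x <= 1.
Proof. unfold ind. destruct (excluded_middle_informative (E x)); lra. Qed.

Section SmallPart.
Context {X : NormedSpace} (E P : X -> Prop).

Definition ConvexWeights (w : nat -> R) (p : nat -> X) n : Prop :=
  (forall i, (i < n)%nat -> (E (p i) \/ P (p i)) /\ 0 <= w i) /\ rsum w n = 1.

Definition mass (w : nat -> R) (p : nat -> X) n : R := rsum (fun i => w i * ind E (p i)) n.

Lemma high_point_near_comb k s r eta u : DualBall k -> 0 < eta ->
  (forall x, E x -> k x <= s - r) -> (forall x, P x -> k x <= s) ->
  ClCo (fun x => E x \/ P x) u -> k u > s - eta ->
  exists n p w, ConvexWeights w p n /\
    ndist u (vsum (fun i => vscal (w i) (p i)) n) < eta /\ r * mass w p n < 2 * eta.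
Proof.
  intros Hk Heta HkE HkP Hu Hku. destruct (Hu eta Heta) as [z [[n [p [w [H1 [H2 ->]]]]] Hd]].
  exists n, p, w. split; [split; auto|]. split; auto.
  pose proof (dual_lipschitz k Hk u (vsum (fun i => vscal (w i) (p i)) n)) as H.
  rewrite dual_vsum in H by auto.
  assert (rsum (fun i => w i * k (p i)) n <= rsum (fun i => w i * (s + (- r) * ind E (p i))) n).
  { apply rsum_le. intros i Hi. destruct (H1 i Hi) as [EPp Hw]. apply Rmult_le_compat_l; auto.
    destruct (classic (E (p i))) as [Ep|Ep].
    - rewrite ind_1 by auto. pose proof (HkE _ Ep). lra.
    - rewrite ind_0 by auto. destruct EPp as [?|Pp]; [tauto|]. pose proof (HkP _ Pp). lra. }
  unfold mass. rewrite rsum_affine, H2 in H0. lra.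
Qed.

Variable rho : R.
Hypothesis rho_ge0 : 0 <= rho.
Hypothesis P_diam : forall x y, P x -> P y -> ndist x y <= rho.
Hypothesis EP_ball : forall x, E x \/ P x -> vnorm x <= 1.

Lemma ndist_le_ind x y : E x \/ P x -> E y \/ P y ->
  ndist x y <= rho + 2 * ind E x + 2 * ind E y.
Proof.
  intros Hx Hy. pose proof (ndist_le_norms x y). pose proof (EP_ball x Hx). pose proof (EP_ball y Hy).
  pose proof (ind_bounds E x). pose proof (ind_bounds E y).
  destruct (classic (E x)) as [Ex|Ex]; [rewrite ind_1 by auto; lra|].
  destruct (classic (E y)) as [Ey|Ey]; [rewrite (ind_1 E y) by auto; lra|].
  rewrite !ind_0 by auto. destruct Hx as [?|Px]; [tauto|]. destruct Hy as [?|Py]; [tauto|].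
  pose proof (P_diam x y Px Py). lra.
Qed.

Lemma ndist_comb_le w p n v q m : ConvexWeights w p n -> ConvexWeights v q m ->
  ndist (vsum (fun i => vscal (w i) (p i)) n) (vsum (fun j => vscal (v j) (q j)) m) <=
  rho + 2 * mass w p n + 2 * mass v q m.
Proof.
  intros [Hw Sw] [Hv Sv]. unfold mass. eapply Rle_trans; [apply ndist_comb; auto; apply Hw|].
  apply Rle_trans with
    (rsum (fun i => w i * ((rho + 2 * rsum (fun j => v j * ind E (q j)) m) + 2 * ind E (p i))) n).
  - apply rsum_le. intros i Hi. apply Rmult_le_compat_l; [apply Hw; auto|].
    rewrite ndist_sym. eapply Rle_trans; [apply ndist_comb; auto; apply Hv|].
    apply Rle_trans with (rsum (fun j => v j * ((rho + 2 * ind E (p i)) + 2 * ind E (q j))) m).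
    + apply rsum_le. intros j Hj. apply Rmult_le_compat_l; [apply Hv; auto|].
      pose proof (ndist_le_ind (q j) (p i) (proj1 (Hv j Hj)) (proj1 (Hw i Hi))). lra.
    + rewrite rsum_affine, Sv. lra.
  - rewrite rsum_affine, Sw. lra.
Qed.

End SmallPart.

Section NonDentableSet.
Context {X : NormedSpace} (A : X -> Prop) (eps : R).
Hypothesis eps_pos : 0 < eps.
Hypothesis A_ne : exists a, A a.
Hypothesis A_ball : forall a, A a -> InUnitBall a.
Hypothesis A_dent : NonDentable eps A.

Local Notation C := (ClCo A).

Lemma dual_ClCo_bounds k y : DualBall k -> C y -> -1 <= k y <= 1.
Proof.
  intros Hk Hy. pose proof (ClCo_unit_ball A y A_ball Hy). pose proof (dual_bound k Hk y).
  pose proof (Rle_abs (k y)). pose proof (Rle_abs (- k y)). rewrite Rabs_Ropp in H2. lra.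
Qed.

Lemma lub_A_ClCo k : DualBall k -> exists s, is_lub (Img A k) s /\ is_lub (Img C k) s.
Proof.
  intros Hk. destruct (completeness (Img A k)) as [s [H1 H2]].
  - exists 1. intros r [y [Hy ->]]. pose proof (dual_ClCo_bounds k y Hk (ClCo_incl A y Hy)). lra.
  - destruct A_ne as [a Ha]. now exists (k a), a.
  - exists s. do 2 (split; auto).
    + intros r [y [Hy ->]]. apply (ClCo_halfspace A k s y Hk); auto.
      intros x Hx. apply H1. now exists x.
    + intros b Hb. apply H2. intros r [y [Hy ->]]. apply Hb. exists y. split; auto.
      now apply ClCo_incl.
Qed.

(* Bourgain's lemma: adding a set of diameter < eps to a proper convex part of C cannot
   exhaust C, for otherwise a thin slice of A would be a small set. *)
Lemma ClCo_union_small_proper E P : (forall x, E x -> C x) -> (forall x, P x -> C x) ->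
  DiamLt P eps -> (exists c, C c /\ ~ ClCo E c) ->
  exists c, C c /\ ~ ClCo (fun x => E x \/ P x) c.
Proof.
  intros HE HP [rho0 [Hrho0 HPd]] [c0 [Hc0 Hnc0]]. apply NNPP. intros Hcov.
  set (rho := Rmax rho0 0).
  assert (Hrho : 0 <= rho < eps) by (split; [apply Rmax_r | apply Rmax_lub_lt; lra]).
  assert (HPrho : forall a b, P a -> P b -> ndist a b <= rho).
  { intros a b Ha Hb. pose proof (HPd a b Ha Hb). pose proof (Rmax_l rho0 0). unfold rho. lra. }
  destruct (ClCo_separation E c0 Hnc0) as [k [r [Hk [Hr Hkr]]]].
  destruct (lub_A_ClCo k Hk) as [s [HsA HsC]].
  assert (Hc0s : k c0 <= s) by now apply (Img_le_lub C).
  assert (HkE : forall x, E x -> k x <= s - r).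
  { intros x Hx. pose proof (Hkr x (ClCo_incl E x Hx)). lra. }
  assert (HkP : forall x, P x -> k x <= s) by (intros; apply (Img_le_lub C k); auto).
  set (eta := (eps - rho) * r / (2 * (2 * r + 8))).
  assert (Heta : 0 < eta).
  { unfold eta. apply Rmult_lt_0_compat; [apply Rmult_lt_0_compat; lra|].
    apply Rinv_0_lt_compat; lra. }
  assert (Hcomb : forall u, A u -> k u > s - eta -> exists n p w, ConvexWeights E P w p n /\
    ndist u (vsum (fun i => vscal (w i) (p i)) n) < eta /\ r * mass E w p n < 2 * eta).
  { intros u Hu Hku. apply (high_point_near_comb E P k s r eta u); auto.
    apply NNPP. intro Hn. apply Hcov. exists u. split; auto. now apply ClCo_incl. }
  destruct (A_dent k eta Hk Heta) as [x [y [Hx [Hy Hxy]]]].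
  apply (Slice_lub A k s eta x HsA) in Hx as [Hx Hkx].
  apply (Slice_lub A k s eta y HsA) in Hy as [Hy Hky].
  destruct (Hcomb x Hx Hkx) as [n [p [w [Hw [Hxz Hm]]]]].
  destruct (Hcomb y Hy Hky) as [m [q [v [Hv [Hyz Hm']]]]].
  assert (EP_ball : forall a, E a \/ P a -> vnorm a <= 1).
  { intros a [Ha|Ha]; apply (ClCo_unit_ball A a A_ball); auto. }
  pose proof (ndist_comb_le E P rho (proj1 Hrho) HPrho EP_ball w p n v q m Hw Hv) as Hzz.
  set (z := vsum (fun i => vscal (w i) (p i)) n) in *.
  set (z' := vsum (fun j => vscal (v j) (q j)) m) in *.
  pose proof (ndist_triangle x z y). pose proof (ndist_triangle z z' y). rewrite (ndist_sym z' y) in H0.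
  (* eta was chosen so that 2 eta + rho + 8 eta / r < eps *)
  assert (eta * (2 * r + 8) = (eps - rho) * r / 2) by (unfold eta; field; lra).
  assert (eps * r < (eta + (rho + 2 * mass E w p n + 2 * mass E v q m) + eta) * r)
    by (apply Rmult_lt_compat_r; lra).
  nra.
Qed.

Lemma slice_avoiding (Ks : list (X -> Prop)) : (forall K, In K Ks -> DiamLt K eps) ->
  forall E, (forall x, E x -> C x) -> (exists c, C c /\ ~ ClCo E c) ->
  exists k e, DualBall k /\ 0 < e /\ (forall y, Slice k C e y -> ~ ClCo E y) /\
    (forall K y, In K Ks -> Slice k C e y -> ~ K y).
Proof.
  induction Ks as [|K Ks IH]; intros HKs E HE [c [Hc Hnc]].
  - destruct (ClCo_separation E c Hnc) as [k [r [Hk [Hr Hkr]]]].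
    destruct (lub_A_ClCo k Hk) as [s [_ HsC]].
    assert (k c <= s) by now apply (Img_le_lub C).
    exists k, (s - k c + r / 2). do 2 (split; [auto; lra|]). split.
    + intros y Hy Hey. apply (Slice_lub C k s _ y HsC) in Hy as [_ Hy]. pose proof (Hkr y Hey). lra.
    + intros K y [].
  - set (E' := fun x => E x \/ (K x /\ C x)).
    destruct (IH (fun K0 H0 => HKs K0 (or_intror H0)) E') as [k [e [Hk [He [H1 H2]]]]].
    { intros x [Hx|[_ Hx]]; auto. }
    { apply ClCo_union_small_proper; auto.
      - intros x [_ Hx]; auto.
      - destruct (HKs K (or_introl eq_refl)) as [r [Hr HKd]]. exists r. split; auto.
        intros x y [Hx _] [Hy _]. auto.
      - now exists c. }
    exists k, e. do 2 (split; auto). split.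
    + intros y Hy Hey. apply (H1 y Hy). eapply ClCo_mono; [|exact Hey]. intros; now left.
    + intros K0 y [<-|HK0] Hy.
      * intros HKy. apply (H1 y Hy). apply ClCo_incl. right. split; auto. apply Hy.
      * now apply (H2 K0 y HK0).
Qed.

Lemma subslice_avoiding (Ks : list (X -> Prop)) h eta : (forall K, In K Ks -> DiamLt K eps) ->
  DualBall h -> 0 < eta ->
  exists k e, DualBall k /\ 0 < e /\ (forall y, Slice k C e y -> Slice h C eta y) /\
    (forall K y, In K Ks -> Slice k C e y -> ~ K y).
Proof.
  intros HKs Hh Heta. destruct (lub_A_ClCo h Hh) as [sh [HshA HshC]].
  set (E0 := fun x => C x /\ ~ Slice h C eta x).
  assert (HE0 : forall y, ClCo E0 y -> h y <= sh - eta).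
  { intros y Hy. apply (ClCo_halfspace E0 h _ y Hh); auto. intros x [HxC Hx].
    apply Rnot_lt_le. intro H. apply Hx. apply (Slice_lub C h sh _ x HshC). split; auto. }
  destruct (lub_approx _ _ _ HshA Heta) as [r0 [[a0 [Ha0 ->]] Ha0']].
  destruct (slice_avoiding Ks HKs E0) as [k [e [Hk [He [Hav1 Hav2]]]]].
  { intros x [Hx _]; auto. }
  { exists a0. split; [now apply ClCo_incl|]. intro H. apply HE0 in H. lra. }
  exists k, e. do 3 (split; auto).
  intros y Hy. apply NNPP. intro Hn. apply (Hav1 y Hy). apply ClCo_incl. split; auto. apply Hy.
Qed.

(* The tilt t = d (3 - gam) / 8 balances the two requirements: f loses less than d on the thin
   slice of [tilt f g t] because (1 - gam)^2 > 0, and g loses less than 2 gam. *)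
Lemma tilt_slice_sub f g d gam xb : DualBall f -> DualBall g -> 0 < d -> 0 < gam < 1 ->
  C xb -> Slice f C (gam * d / 2) xb ->
  let t := d * (3 - gam) / 8 in
  forall c, Slice (tilt f g t) C (gam * d * (1 - gam) / (4 * (1 + t))) c ->
  Slice f C d c /\ g c > g xb - 2 * gam.
Proof.
  intros Hf Hg Hd Hgam Hxb Hsl t c Hc.
  assert (Ht : 0 < t) by (unfold t; apply Rmult_lt_0_compat; [apply Rmult_lt_0_compat|]; lra).
  destruct (lub_A_ClCo f Hf) as [sf [_ HsfC]].
  destruct (lub_A_ClCo (tilt f g t) (tilt_dual f g t Hf Hg Ht)) as [sh [_ HshC]].
  apply (Slice_lub C f sf _ xb HsfC) in Hsl as [_ Hfxb].
  apply (Slice_lub C _ sh _ c HshC) in Hc as [HcC Hhc].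
  assert (tilt f g t xb <= sh) by now apply (Img_le_lub C).
  assert (f c <= sf) by now apply (Img_le_lub C).
  pose proof (dual_ClCo_bounds g c Hg HcC). pose proof (dual_ClCo_bounds g xb Hg Hxb).
  assert (Key : f c + t * g c > f xb + t * g xb - gam * d * (1 - gam) / 4).
  { unfold tilt in *. apply Rmult_lt_reg_r with (/ (1 + t)); [apply Rinv_0_lt_compat; lra|].
    replace ((f xb + t * g xb - gam * d * (1 - gam) / 4) * / (1 + t))
      with ((f xb + t * g xb) / (1 + t) - gam * d * (1 - gam) / (4 * (1 + t))) by (field; lra).
    fold (Rdiv (f c + t * g c) (1 + t)). lra. }
  assert (2 * t = d * (3 - gam) / 4) by (unfold t; field).
  split.
  - apply (Slice_lub C f sf _ c HsfC). split; auto.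
    assert (t * (g xb - g c) >= - 2 * t) by nra.
    assert (0 <= d * ((1 - gam) * (1 - gam))) by (apply Rmult_le_pos; [lra|nra]).
    nra.
  - assert (t * (g c - g xb + 2 * gam) > 0) by nra.
    assert (g c - g xb + 2 * gam > 0).
    { apply Rnot_le_lt. intro Hle. assert (t * (g c - g xb + 2 * gam) <= 0) by nra. lra. }
    lra.
Qed.

Definition ChildSlice (Ks : list (X -> Prop)) (f : X -> R) d gam (g : X -> R) e (y : X) : Prop :=
  DualBall g /\ 0 < e /\ Slice g C (gam * e / 2) y /\
  (forall z, Slice g C e z -> Slice f C d z) /\
  (forall K z, In K Ks -> Slice g C e z -> ~ K z).

Section Children.
Variables (Ks : list (X -> Prop)) (gam gam' : R) (f : X -> R) (d : R) (xb : X).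
Hypothesis Ks_small : forall K, In K Ks -> DiamLt K eps.
Hypothesis gam_01 : 0 < gam < 1.
Hypothesis gam'_01 : 0 < gam' < 1.
Hypothesis f_dual : DualBall f.
Hypothesis d_pos : 0 < d.
Hypothesis xb_A : A xb.
Hypothesis xb_slice : Slice f C (gam * d / 2) xb.

(* If xb were 2 gam away from the hull of good children, a separating g and a tilt of f towards g
   would produce a thin slice inside S(f, C, d) whose good subslices contain points of A, hence good
   children, on which g is nevertheless above g xb - 2 gam. *)
Lemma shallow_point_near_children :
  exists z, Co (fun y => A y /\ exists g e, ChildSlice Ks f d gam' g e y) z /\ ndist xb z < 2 * gam.
Proof.
  set (G := fun y => A y /\ exists g e, ChildSlice Ks f d gam' g e y).
  apply NNPP. intro Hno.
  destruct (convex_separation (Co G) xb (2 * gam)) as [g [Hg Hgsep]].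
  { intros; now apply Co_convex. }
  { intros y Hy. apply Rnot_lt_le. intro H. apply Hno. now exists y. }
  set (t := d * (3 - gam) / 8).
  assert (Ht : 0 < t) by (unfold t; apply Rmult_lt_0_compat; [apply Rmult_lt_0_compat|]; lra).
  set (eta := gam * d * (1 - gam) / (4 * (1 + t))).
  assert (Heta : 0 < eta).
  { unfold eta. apply Rmult_lt_0_compat; [apply Rmult_lt_0_compat; [apply Rmult_lt_0_compat|]|];
      try lra. apply Rinv_0_lt_compat. lra. }
  destruct (subslice_avoiding Ks (tilt f g t) eta Ks_small (tilt_dual f g t f_dual Hg Ht) Heta)
    as [k [e [Hk [He [Hin Hav]]]]].
  destruct (lub_A_ClCo k Hk) as [sk [HskA HskC]].
  assert (Hge : 0 < gam' * e / 2) by (apply Rmult_lt_0_compat; [apply Rmult_lt_0_compat|]; lra).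
  destruct (lub_approx _ _ _ HskA Hge) as [r1 [[a1 [Ha1 ->]] Hr1]].
  assert (Ha1C : C a1) by now apply ClCo_incl.
  assert (Ha1S : Slice k C e a1).
  { apply (Slice_lub C k sk _ a1 HskC). split; auto. assert (gam' * e / 2 < e) by nra. lra. }
  destruct (tilt_slice_sub f g d gam xb f_dual Hg d_pos gam_01 (ClCo_incl A xb xb_A) xb_slice
              a1 (Hin a1 Ha1S)) as [_ Hga1].
  assert (HG : G a1).
  { split; auto. exists k, e. do 2 (split; auto). split.
    - apply (Slice_lub C k sk _ a1 HskC). split; auto.
    - split; auto. intros y Hy.
      now apply (tilt_slice_sub f g d gam xb f_dual Hg d_pos gam_01 (ClCo_incl A xb xb_A) xb_slice),
        Hin. }
  pose proof (Hgsep a1 (Co_single G a1 HG)). lra.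
Qed.

Lemma children_exist : exists q (ys : nat -> X) (gs : nat -> X -> R) (es : nat -> R), (1 <= q)%nat /\
  (forall i, (1 <= i <= q)%nat -> A (ys i) /\ ChildSlice Ks f d gam' (gs i) (es i) (ys i)) /\
  InCoPlusBall xb ys q (2 * gam).
Proof.
  destruct shallow_point_near_children as [z [[n [p [w [H1 [H2 H3]]]]] Hz]].
  assert (Hex : forall i, exists ge : (X -> R) * R,
            (i < n)%nat -> ChildSlice Ks f d gam' (fst ge) (snd ge) (p i)).
  { intros i. destruct (Nat.lt_ge_cases i n) as [Hi|Hi].
    - destruct (H1 i Hi) as [[_ [g [e He]]] _]. now exists (g, e).
    - exists (fun _ => 0, 0). intros; lia. }
  destruct (choice _ Hex) as [ge Hge].
  (* children are numbered from 1, the convex combination from 0 *)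
  exists n, (fun i => p (i - 1)%nat), (fun i => fst (ge (i - 1)%nat)), (fun i => snd (ge (i - 1)%nat)).
  split; [|split].
  - destruct n; [simpl in H2; lra | lia].
  - intros i Hi. split; [apply H1; lia | apply Hge; lia].
  - exists z. split; auto. exists n, p, w. split; [|split; auto].
    intros i Hi. split; [|apply H1; auto]. exists (S i). split; [lia|]. simpl. now rewrite Nat.sub_0_r.
Qed.

End Children.

End NonDentableSet.

Record node (X : NormedSpace) := Node { npt : X; nfun : X -> R; nwidth : R }.
Arguments Node {X} _ _ _.
Arguments npt {X} _.
Arguments nfun {X} _.
Arguments nwidth {X} _.

Section SliceTree.
Context {X : NormedSpace} (A : X -> Prop) (eps delta : R) (B : nat -> X -> Prop) (dl : nat -> R).

Local Notation C := (ClCo A).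

Definition NodeOk n (nd : node X) : Prop :=
  A (npt nd) /\ DualBall (nfun nd) /\ 0 < nwidth nd /\
  Slice (nfun nd) C (dl n * nwidth nd / 2) (npt nd).

Definition ChildrenOk n (Ks : list (X -> Prop)) (nd : node X) (q : nat) (ch : nat -> node X) : Prop :=
  (1 <= q)%nat /\
  (forall i, (1 <= i <= q)%nat -> A (npt (ch i)) /\
     ChildSlice A Ks (nfun nd) (nwidth nd) (dl (S n)) (nfun (ch i)) (nwidth (ch i)) (npt (ch i))) /\
  InCoPlusBall (npt nd) (fun i => npt (ch i)) q (2 * dl n).

Lemma ChildrenOk_NodeOk n Ks nd q ch i : ChildrenOk n Ks nd q ch -> (1 <= i <= q)%nat ->
  NodeOk (S n) (ch i).
Proof. intros [_ [H _]] Hi. destruct (H i Hi) as [HA [Hg [He [Hs _]]]]. now split. Qed.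

Record level := Level { lnodes : list (list nat); ldata : list nat -> node X; lpts : list X }.

Definition avoid n (L : level) : list (X -> Prop) :=
  B n :: map (fun p y => ndist y p < delta) (lpts L).

Lemma avoid_small n L : (forall n, DiamLt (B n) eps) -> 2 * delta < eps ->
  forall K, In K (avoid n L) -> DiamLt K eps.
Proof.
  intros HB Hde K [<-|HK]; auto. apply in_map_iff in HK as [p [<- _]].
  exists (2 * delta). split; auto. intros x y Hx Hy.
  pose proof (ndist_triangle x p y). rewrite (ndist_sym p y) in H. lra.
Qed.

Variable children : nat -> list (X -> Prop) -> node X -> nat * (nat -> node X).
Variable root : node X.

(* A child [b ++ [i]] is described by entry [i] of the choice made at its parent [b]; [lpts]
   accumulates the points of all levels so far. *)
Definition next_level n (L : level) : level :=
  let kids b := children n (avoid n L) (ldata L b) in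
  let nodes := flat_map (fun b => map (fun i => b ++ [i]) (seq 1 (fst (kids b)))) (lnodes L) in
  let data b := snd (kids (removelast b)) (last b 0%nat) in
  Level nodes data (lpts L ++ map (fun b => npt (data b)) nodes).

Fixpoint level_at n : level :=
  match n with
  | O => Level [[]] (fun _ => root) [npt root]
  | S m => next_level m (level_at m)
  end.

Definition in_tree (b : list nat) : Prop := In b (lnodes (level_at (length b))).
Definition data (b : list nat) : node X := ldata (level_at (length b)) b.
Definition avoid_at (b : list nat) : list (X -> Prop) := avoid (length b) (level_at (length b)).
Definition nkids (b : list nat) : nat := fst (children (length b) (avoid_at b) (data b)).

Lemma data_child b i : data (b ++ [i]) = snd (children (length b) (avoid_at b) (data b)) i.
Proof.
  unfold data. rewrite length_app, Nat.add_1_r. simpl.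
  now rewrite removelast_last, last_last.
Qed.

Lemma in_tree_nil : in_tree [].
Proof. now left. Qed.

Lemma in_tree_child b i : in_tree (b ++ [i]) <-> in_tree b /\ (1 <= i <= nkids b)%nat.
Proof.
  unfold in_tree, nkids, avoid_at, data. rewrite length_app, Nat.add_1_r. simpl.
  rewrite in_flat_map. split.
  - intros [b0 [H1 H2]]. apply in_map_iff in H2 as [i0 [H3 H4]].
    apply app_inj_tail in H3 as [-> ->]. apply in_seq in H4. split; auto. lia.
  - intros [H1 H2]. exists b. split; auto. apply in_map_iff. exists i. split; auto. apply in_seq. lia.
Qed.

Lemma lpts_level_at n p : in_tree p -> (length p <= n)%nat -> In (npt (data p)) (lpts (level_at n)).
Proof.
  induction n; intros Hp Hl.
  - destruct p; [now left | simpl in Hl; lia].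
  - simpl. apply in_or_app. destruct (Nat.le_gt_cases (length p) n) as [H|H]; [left; auto|].
    right. assert (Hlen : length p = S n) by lia. unfold in_tree in Hp. rewrite Hlen in Hp.
    apply in_map_iff. exists p. split; auto. unfold data. now rewrite Hlen.
Qed.

Hypothesis children_spec : forall n Ks nd, NodeOk n nd -> (forall K, In K Ks -> DiamLt K eps) ->
  ChildrenOk n Ks nd (fst (children n Ks nd)) (snd (children n Ks nd)).
Hypothesis B_small : forall n, DiamLt (B n) eps.
Hypothesis delta_small : 2 * delta < eps.
Hypothesis root_ok : NodeOk 0 root.

Lemma data_ok b : in_tree b -> NodeOk (length b) (data b).
Proof.
  induction b as [|i b IH] using rev_ind; intros Hb; [exact root_ok|].
  apply in_tree_child in Hb as [Hb Hi]. rewrite data_child, length_app, Nat.add_1_r.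
  eapply ChildrenOk_NodeOk; [|exact Hi]. apply children_spec; auto. now apply avoid_small.
Qed.

Lemma kids_ok b : in_tree b ->
  ChildrenOk (length b) (avoid_at b) (data b) (nkids b) (fun i => data (b ++ [i])).
Proof.
  intros Hb. replace (fun i => data (b ++ [i])) with (snd (children (length b) (avoid_at b) (data b))).
  - apply children_spec; [now apply data_ok | now apply avoid_small].
  - apply functional_extensionality. intros i. now rewrite data_child.
Qed.

End SliceTree.

Section Construction.
Context {X : NormedSpace} (A : X -> Prop) (eps delta : R) (B : nat -> X -> Prop) (dl : nat -> R).
Hypothesis eps_pos : 0 < eps.
Hypothesis A_ne : exists a, A a.
Hypothesis A_ball : forall a, A a -> InUnitBall a.
Hypothesis A_dent : NonDentable eps A.
Hypothesis delta_small : 2 * delta < eps.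
Hypothesis B_small : forall n, DiamLt (B n) eps.
Hypothesis dl_01 : forall n, 0 < dl n < 1.

Local Notation C := (ClCo A).

Lemma children_choice : exists children : nat -> list (X -> Prop) -> node X -> nat * (nat -> node X),
  forall n Ks nd, NodeOk A dl n nd -> (forall K, In K Ks -> DiamLt K eps) ->
    ChildrenOk A dl n Ks nd (fst (children n Ks nd)) (snd (children n Ks nd)).
Proof.
  assert (Hex : forall c : nat * list (X -> Prop) * node X, exists r : nat * (nat -> node X),
    let '(n, Ks, nd) := c in NodeOk A dl n nd -> (forall K, In K Ks -> DiamLt K eps) ->
      ChildrenOk A dl n Ks nd (fst r) (snd r)).
  { intros [[n Ks] [x f d]]. destruct (classic (NodeOk A dl n (Node x f d))) as [[Hx [Hf [Hd Hs]]]|Hn].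
    - destruct (classic (forall K, In K Ks -> DiamLt K eps)) as [HK|HK].
      + destruct (children_exist A eps eps_pos A_ne A_ball A_dent Ks (dl n) (dl (S n)) f d x HK
                    (dl_01 n) (dl_01 (S n)) Hf Hd Hx Hs) as [q [ys [gs [es [H1 [H2 H3]]]]]].
        exists (q, fun i => Node (ys i) (gs i) (es i)). intros _ _. now split.
      + exists (O, fun _ => Node x f d). tauto.
    - exists (O, fun _ => Node x f d). tauto. }
  destruct (choice _ Hex) as [F HF].
  exists (fun n Ks nd => F (n, Ks, nd)). intros n Ks nd. exact (HF (n, Ks, nd)).
Qed.

Lemma root_ok a : A a -> NodeOk A dl 0 (Node a (fun _ => 0) 1).
Proof.
  intros Ha. split; [auto|split; [|split]]; simpl.
  - split; [intros; ring|split; [intros; ring|]]. intros x. rewrite Rabs_R0. apply vnorm_ge0.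
  - lra.
  - split; [now apply ClCo_incl|]. exists 0. split.
    + split; [intros r [y [_ ->]]; lra|]. intros b Hb. apply Hb. exists a. split; auto.
      now apply ClCo_incl.
    + pose proof (dl_01 0). lra.
Qed.

Lemma slice_tree_exists : exists (T : list nat -> Prop) (k : list nat -> nat) (x : list nat -> X)
    (f : list nat -> X -> R) (d : list nat -> R),
  FinBranchTree T k /\
  (forall b, T b -> (1 <= k b)%nat /\ A (x b) /\ DualBall (f b) /\ 0 < d b /\
     Slice (f b) C (dl (length b) * d b / 2) (x b) /\
     InCoPlusBall (x b) (fun i => x (b ++ [i])) (k b) (2 * dl (length b))) /\
  (forall b i y, T (b ++ [i]) -> Slice (f (b ++ [i])) C (d (b ++ [i])) y ->
     Slice (f b) C (d b) y /\ ~ B (length b) y /\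
     forall p, T p -> (length p <= length b)%nat -> ~ ndist y (x p) < delta).
Proof.
  destruct children_choice as [children Hch]. destruct A_ne as [a Ha].
  set (root := Node a (fun _ => 0) 1).
  set (nd := data delta B children root).
  set (T := in_tree delta B children root).
  assert (Hdata : forall b, T b -> NodeOk A dl (length b) (nd b))
    by (intros; eapply data_ok; eauto; now apply root_ok).
  assert (Hkids : forall b, T b -> ChildrenOk A dl (length b) (avoid_at delta B children root b)
                                (nd b) (nkids delta B children root b) (fun i => nd (b ++ [i])))
    by (intros; eapply kids_ok; eauto; now apply root_ok).
  exists T, (nkids delta B children root), (fun b => npt (nd b)), (fun b => nfun (nd b)),
    (fun b => nwidth (nd b)).
  split; [|split].
  - split; [apply in_tree_nil|]. split; [intros b i Hb; now apply in_tree_child in Hb|].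
    intros b i Hb. unfold T. rewrite in_tree_child. tauto.
  - intros b Hb. destruct (Hdata b Hb) as [H1 [H2 [H3 H4]]]. destruct (Hkids b Hb) as [K1 [_ K3]].
    tauto.
  - intros b i y Hbi Hy. apply in_tree_child in Hbi as [Hb Hi].
    destruct (Hkids b Hb) as [_ [K2 _]]. destruct (K2 i Hi) as [_ [_ [_ [_ [Hsub Hav]]]]].
    split; [now apply Hsub|]. split.
    + apply (Hav (B (length b))); auto. now left.
    + intros p Hp Hlp. apply (Hav (fun z => ndist z (npt (nd p)) < delta)); auto. right.
      apply in_map_iff. exists (npt (nd p)). split; auto. now apply lpts_level_at.
Qed.

End Construction.

Theorem mainTheorem9 (X : NormedSpace) (HX : Banach X) (eps : R) (Heps : 0 < eps)
  (A : X -> Prop) (HAne : exists a, A a) (HAball : forall a, A a -> InUnitBall a)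
  (HAsep : SeparableSet A) (HAdent : NonDentable eps A)
  (delta : R) (Hdelta0 : 0 < delta) (Hdelta : delta < eps / 2)
  (B : nat -> X -> Prop)
  (HBopen : forall i, RelOpen (B i) (ClCo A))
  (HBdiam : forall i, DiamLt (B i) eps)
  (HBcover : forall c, ClCo A c -> exists i, B i c)
  (dl : nat -> R) (Hdl : forall n, 0 < dl n < 1) :
  exists (T : list nat -> Prop) (k : list nat -> nat) (x : list nat -> X)
         (f : list nat -> X -> R) (d : list nat -> R),
    FinBranchTree T k /\
    (forall b, T b -> (1 <= k b)%nat) /\
    (forall b, T b -> A (x b) /\ DualBall (f b) /\ 0 < d b) /\
    (forall n,
      (* (1) *)
      (forall b, T b -> length b = n ->
         Slice (f b) (ClCo A) (dl n * d b / 2) (x b) /\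
         (forall y, Slice (f b) (ClCo A) (dl n * d b / 2) y -> A y ->
                    Slice (f b) (ClCo A) (d b) y)) /\
      (* (2) *)
      ((1 <= n)%nat -> forall b, T b -> length b = n ->
         (forall y, Slice (f b) (ClCo A) (d b) y -> ~ B (n - 1)%nat y) /\
         (forall y, Slice (f b) (ClCo A) (d b) y ->
            forall p, T p -> (length p <= n - 1)%nat -> ~ (ndist y (x p) < delta))) /\
      (* (3) *)
      ((1 <= n)%nat -> forall b, T b -> length b = (n - 1)%nat ->
         (forall i, (1 <= i <= k b)%nat ->
            forall y, Slice (f (b ++ [i])) (ClCo A) (d (b ++ [i])) y ->
                      Slice (f b) (ClCo A) (d b) y) /\
         InCoPlusBall (x b) (fun i => x (b ++ [i])) (k b) (2 * dl (n - 1)%nat))) /\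
    ApproxBush T k x (fun n => 2 * dl n).
Proof.
  destruct (slice_tree_exists A eps delta B dl Heps HAne HAball HAdent ltac:(lra) HBdiam Hdl)
    as [T [k [x [f [d [HT [Hnode Hchild]]]]]]].
  pose proof HT as [_ [_ HTchild]].
  exists T, k, x, f, d. split; [|split; [|split; [|split]]]; auto.
  - intros b Hb. apply Hnode; auto.
  - intros b Hb. pose proof (Hnode b Hb). tauto.
  - intros n. split; [|split].
    + intros b Hb <-. destruct (Hnode b Hb) as [_ [_ [_ [Hd [Hs _]]]]]. split; auto.
      intros y Hy _. apply Slice_widen with (dl (length b) * d b / 2); auto.
      pose proof (Hdl (length b)). nra.
    + intros Hn b Hb Hl. destruct b as [|j b _] using rev_ind; [simpl in Hl; lia|].
      rewrite length_app in Hl. simpl in Hl. replace (n - 1)%nat with (length b) by lia.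
      split; intros y Hy; now apply (Hchild b j y Hb Hy).
    + intros Hn b Hb <-. split; [|apply Hnode; auto].
      intros i Hi y Hy. apply (Hchild b i y); auto. now apply HTchild.
  - intros n b Hb <-. apply Hnode; auto.
Qed.
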